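(* Let $p_t,p_g\in[0,1]$ with $p_tp_g<1$. For every instance $\mathcal{I}$ and binary prediction $\hat{\mathbf{O}}$, the algorithm \textsc{SmoothMerge} with parameters $p_t,p_g$ satisfies \[ \mathbb{E}[|\textsc{Alg}(\mathcal{I})|] \ge \max\Big\{ |\textsc{Opt}(\mathcal{I})|\cdot(1-\eta)\cdot p_t(1-p_g),\ \frac{p_g-p_tp_g}{1-p_tp_g}\cdot|\textsc{Greedy}(\mathcal{I})| \Big\}, \] where $\eta=\eta(\mathcal{I},\hat{\mathbf{O}})$ is the prediction error.
   Context: Online interval scheduling: intervals $I_j$ with release time $r_j$, deadline $d_j$, length $l_j=d_j-r_j$ arrive online in non-decreasing order of release time; each must be irrevocably accepted or rejected upon arrival; accepted intervals must be pairwise non-overlapping; objective: maximize total accepted length $|\cdot|$. $\textsc{Opt}(\mathcal{I})$ is an optimal offline solution. A binary prediction $\hat{\mathbf{O}}=(\hat o_1,\dots,\hat o_n)\in\{0,1\}^n$ is revealed online with the intervals. $\textsc{Trust}$ is the algorithm accepting $I_j$ iff $\hat o_j=1$; $\textsc{Greedy}$ accepts each arriving interval iff it does not overlap any interval previously accepted by $\textsc{Greedy}$. Prediction error: $\eta(\mathcal{I},\hat{\mathbf{O}})=\frac{|\textsc{Opt}(\mathcal{I})|-|\textsc{Trust}(\mathcal{I},\hat{\mathbf{O}})|}{|\textsc{Opt}(\mathcal{I})|}$. \textsc{SmoothMerge}$(p_t,p_g)$: it simulates \textsc{Trust} and \textsc{Greedy} on the input and maintains a set $S$ (initially empty); on arrival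 of $I$: if $I$ overlaps an interval in $S$, reject; else if both \textsc{Trust} and \textsc{Greedy} accept $I$, add $I$ to $S$; else if only \textsc{Trust} accepts $I$, add $I$ to $S$ with probability $p_t$; else if only \textsc{Greedy} accepts $I$, add $I$ to $S$ with probability $p_g$; else reject (all coin flips independent). The output is $S$, and $\textsc{Alg}(\mathcal{I})=S$.
   Formalization: The binary prediction $\hat{\mathbf{O}}$ ranges only over predictions whose intervals with $\hat o_j=1$ are pairwise non-overlapping, so the output of Trust is itself a feasible schedule. The paper assumes this as well. *)

From HB Require Import structures.
From mathcomp Require Import all_boot all_order all_algebra.
Set Implicit Arguments. Unset Strict Implicit. Unset Printing Implicit Defensive.
Import Order.TTheory GRing.Theory Num.Theory.
Local Open Scope ring_scope.

Section Sched.
Variable R : realFieldType.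

(* An job x = (r, d): release time x.1, deadline x.2. *)
Definition job := (R * R)%type.
Definition len (J0 : job) : R := J0.2 - J0.1.
(* Intervals [r1,d1) and [r2,d2) overlap iff they share a point of positive measure. *)
Definition overlap (J0 J : job) : bool := (J0.1 < J.2) && (J.1 < J0.2).
Definition feasible (s : seq job) : bool := pairwise (fun J0 J => ~~ overlap J0 J) s.
Definition total_len (s : seq job) : R := \sum_(J0 <- s) len J0.

Definition valid_instance (s : seq job) : bool :=
  all (fun J0 => J0.1 < J0.2) s && sorted (fun J0 J => J0.1 <= J.1) s.

Definition opt_value (s : seq job) : R :=
  \big[Num.max/0]_(m : {ffun 'I_(size s) -> bool} | feasible (mask (codom m) s))
     total_len (mask (codom m) s).

Fixpoint greedy_aux (acc : seq job) (s : seq job) : seq bool :=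
  match s with
  | [::] => [::]
  | J0 :: s' => let a := ~~ has (overlap J0) acc in
               a :: greedy_aux (if a then J0 :: acc else acc) s'
  end.
Definition greedy_dec (s : seq job) : seq bool := greedy_aux [::] s.
Definition greedy (s : seq job) : seq job := mask (greedy_dec s) s.

Definition trust (s : seq job) (o : seq bool) : seq job := mask o s.

Definition eta (s : seq job) (o : seq bool) : R :=
  (opt_value s - total_len (trust s o)) / opt_value s.

(* SmoothMerge run with given Trust decisions t, Greedy decisions g and
   coin outcomes: a j is the p_t-coin, b j is the p_g-coin for job j. *)
Fixpoint smooth_aux (S : seq job) (s : seq job) (t g a b : seq bool)
  : seq job :=
  match s, t, g, a, b with
  | J0 :: s', ti :: t', gg :: g', aa :: a', bb :: b' =>
      let add := if has (overlap J0) S then false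
                 else if ti && gg then true
                 else if ti then aa
                 else if gg then bb
                 else false in
      smooth_aux (if add then rcons S J0 else S) s' t' g' a' b'
  | _, _, _, _, _ => S
  end.

Definition smooth_merge (s : seq job) (o a b : seq bool) : seq job :=
  smooth_aux [::] s o (greedy_dec s) a b.

Definition bern_weight (n : nat) (p : R) (c : {ffun 'I_n -> bool}) : R :=
  \prod_(i < n) (if c i then p else 1 - p).

Definition expected_alg (pt pg : R) (s : seq job) (o : seq bool) : R :=
  \sum_(a : {ffun 'I_(size s) -> bool}) \sum_(b : {ffun 'I_(size s) -> bool})
    bern_weight pt a * bern_weight pg b *
    total_len (smooth_merge s o (codom a) (codom b)).

End Sched.

(* By linearity, E|Alg| is the sum over the jobs i of P[i accepted] |I_i|. The
   coins of job i are independent of the earlier decisions, so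
   P[i accepted] = q_i (1 - P[an earlier accepted job overlaps i]), where q_i is
   1, p_t, p_g or 0 according to the Trust and Greedy decisions on i. Release
   times are sorted and Trust and Greedy are both feasible, so at most one
   earlier Trust job and one earlier Greedy job overlap i, and every accepted job
   is accepted by Trust or Greedy. Hence a job of both is accepted surely, a
   Trust-only job with probability p_t (1 - P[G]) for the Greedy job G blocking
   it, and a Greedy-only job with probability p_g or p_g (1 - P[J]) for a
   Trust-only job J blocking it. Induction over the jobs gives P >= p_t (1 - p_g)
   on Trust jobs and P >= (p_g - p_t p_g) / (1 - p_t p_g) on Greedy jobs. *)

From mathcomp Require Import all_boot all_order all_algebra.
From mathcomp Require Import ring lra.
Import Order.TTheory GRing.Theory Num.Theory.
Set Implicit Arguments. Unset Strict Implicit. Unset Printing Implicit Defensive.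
Local Open Scope ring_scope.

Section Coins.
Variable R : realFieldType.

Fixpoint Ecoins (p : R) (n : nat) (f : seq bool -> R) : R :=
  if n is n'.+1 then
    p * Ecoins p n' (fun a => f (true :: a)) +
    (1 - p) * Ecoins p n' (fun a => f (false :: a))
  else f [::].

Lemma Ecoins_linear p n u v f g :
  Ecoins p n (fun a => u * f a + v * g a) = u * Ecoins p n f + v * Ecoins p n g.
Proof.
elim: n f g => [|n IH] f g //=.
rewrite (IH (fun a => f (true :: a))) (IH (fun a => f (false :: a))); ring.
Qed.

Lemma sum_bern_weight p n (f : seq bool -> R) :
  \sum_(a : {ffun 'I_n -> bool}) bern_weight p a * f (codom a) = Ecoins p n f.
Proof.
elim: n f => [|n IH] f.
  rewrite (big_pred1 [ffun=> false]) => [|a]; last first.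
    by apply/esym/eqP/ffunP => -[].
  rewrite /bern_weight big_ord0 mul1r; congr f.
  by apply: size0nil; rewrite size_codom card_ord.
pose cons_ffun (xa : bool * {ffun 'I_n -> bool}) : {ffun 'I_n.+1 -> bool} :=
  [ffun i => if unlift ord0 i is Some j then xa.2 j else xa.1].
rewrite (reindex cons_ffun) /=; last first.
  exists (fun a => (a ord0, [ffun j => a (lift ord0 j)])) => [[x a] _|a _].
    rewrite ffunE unlift_none; congr pair; apply/ffunP => j.
    by rewrite !ffunE liftK.
  apply/ffunP => i; rewrite ffunE /=.
  by case: unliftP => [j ->|->]; rewrite ?ffunE.
have cons_ffunE x a : bern_weight p (cons_ffun (x, a)) =
    (if x then p else 1 - p) * bern_weight p a /\
    codom (cons_ffun (x, a)) = x :: codom a.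
  split.
    rewrite /bern_weight big_ord_recl ffunE unlift_none; congr (_ * _).
    by apply: eq_bigr => j _; rewrite ffunE liftK.
  rewrite !codomE enum_ordSl /= ffunE unlift_none -map_comp; congr cons.
  by apply: eq_map => j /=; rewrite ffunE liftK.
rewrite -(pair_bigA _ (fun x a => bern_weight p (cons_ffun (x, a)) *
                                  f (codom (cons_ffun (x, a))))) big_bool /=.
rewrite -(IH (fun a => f (true :: a))) -(IH (fun a => f (false :: a))) !mulr_sumr.
congr (_ + _); apply: eq_bigr => a _.
- by case: (cons_ffunE true a) => -> ->; rewrite mulrA.
- by case: (cons_ffunE false a) => -> ->; rewrite mulrA.
Qed.

Variables pt pg : R.

Definition Epair (h : bool -> bool -> R) : R :=
  pt * pg * h true true + pt * (1 - pg) * h true false +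
  (1 - pt) * pg * h false true + (1 - pt) * (1 - pg) * h false false.

Lemma eq_Epair h1 h2 : (forall x y, h1 x y = h2 x y) -> Epair h1 = Epair h2.
Proof. by move=> h12; rewrite /Epair !h12. Qed.

Fixpoint Ecoins2 (n : nat) (F : seq bool -> seq bool -> R) : R :=
  if n is n'.+1 then Epair (fun x y => Ecoins2 n' (fun a b => F (x :: a) (y :: b)))
  else F [::] [::].

Lemma Ecoins_Ecoins2 n F :
  Ecoins pt n (fun a => Ecoins pg n (F a)) = Ecoins2 n F.
Proof.
elim: n F => [|n IH] F //=.
rewrite !(Ecoins_linear pt n pg (1 - pg) (fun a => Ecoins pg n _)).
by rewrite !IH /Epair; ring.
Qed.

Lemma eq_Ecoins2 n F G :
  (forall a b, size a = n -> size b = n -> F a b = G a b) -> Ecoins2 n F = Ecoins2 n G.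
Proof.
elim: n F G => [|n IH] F G FG /=; first exact: FG.
rewrite /Epair; congr (_ + _ + _ + _); congr (_ * _); apply: IH => a b ha hb;
  by apply: FG; rewrite /= ?ha ?hb.
Qed.

Lemma Ecoins2D n F G : Ecoins2 n (fun a b => F a b + G a b) = Ecoins2 n F + Ecoins2 n G.
Proof. by elim: n F G => [|n IH] F G //=; rewrite /Epair !IH; ring. Qed.

Lemma Ecoins2Z n c F : Ecoins2 n (fun a b => c * F a b) = c * Ecoins2 n F.
Proof. by elim: n F => [|n IH] F //=; rewrite /Epair !IH; ring. Qed.

Lemma Ecoins2_cst n c : Ecoins2 n (fun _ _ => c) = c.
Proof. by elim: n => [|n IH] //=; rewrite /Epair IH; ring. Qed.

Lemma Ecoins2_sum n m (F : nat -> seq bool -> seq bool -> R) :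
  Ecoins2 n (fun a b => \sum_(i < m) F i a b) = \sum_(i < m) Ecoins2 n (F i).
Proof.
elim: m => [|m IH].
  rewrite big_ord0 -[RHS](Ecoins2_cst n).
  by apply: eq_Ecoins2 => a b _ _; rewrite big_ord0.
rewrite big_ord_recr /= -IH -Ecoins2D.
by apply: eq_Ecoins2 => a b _ _; rewrite big_ord_recr.
Qed.

Lemma Ecoins2_cat k m F : Ecoins2 (k + m) F =
  Ecoins2 k (fun a b => Ecoins2 m (fun a' b' => F (a ++ a') (b ++ b'))).
Proof.
elim: k F => [|k IH] F //=.
by rewrite /Epair !IH.
Qed.

Lemma Ecoins2_prefix k n F : (k <= n)%N ->
  (forall a b a' b', size a = k -> size b = k -> F (a ++ a') (b ++ b') = F a b) ->
  Ecoins2 n F = Ecoins2 k F.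
Proof.
move=> kn Fk; rewrite -(subnKC kn) Ecoins2_cat; apply: eq_Ecoins2 => a b ha hb.
by rewrite -[RHS](Ecoins2_cst (n - k)); apply: eq_Ecoins2 => a' b' _ _; apply: Fk.
Qed.

Lemma Ecoins2_split i n F G : (i < n)%N ->
  (forall a b a' b' x y, size a = i -> size b = i ->
     F (a ++ x :: a') (b ++ y :: b') = G a b x y) ->
  Ecoins2 n F = Ecoins2 i (fun a b => Epair (G a b)).
Proof.
move=> lt_in FG; rewrite -(subnKC (ltnW lt_in)) Ecoins2_cat.
apply: eq_Ecoins2 => a b ha hb; rewrite -subn_gt0 in lt_in.
case: (n - i)%N lt_in => [|m] //= _; apply: eq_Epair => x y.
by rewrite -[RHS](Ecoins2_cst m); apply: eq_Ecoins2 => a' b' _ _; apply: FG.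
Qed.

Hypothesis pt01 : 0 <= pt <= 1.
Hypothesis pg01 : 0 <= pg <= 1.

Lemma ler_Epair h1 h2 : (forall x y, h1 x y <= h2 x y) -> Epair h1 <= Epair h2.
Proof.
move: pt01 pg01 => /andP[? ?] /andP[? ?] h12; rewrite /Epair.
by rewrite !lerD // ler_wpM2l // mulr_ge0 // subr_ge0.
Qed.

Lemma ler_Ecoins2 n F G :
  (forall a b, size a = n -> size b = n -> F a b <= G a b) -> Ecoins2 n F <= Ecoins2 n G.
Proof.
elim: n F G => [|n IH] F G FG /=; first exact: FG.
by apply: ler_Epair => x y; apply: IH => a b ha hb; apply: FG; rewrite /= ?ha ?hb.
Qed.

Lemma Ecoins2_bool_01 n (X : seq bool -> seq bool -> bool) :
  0 <= Ecoins2 n (fun a b => (X a b)%:R) <= 1.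
Proof.
apply/andP; split;
  [rewrite -(Ecoins2_cst n 0) | rewrite -[X in _ <= X](Ecoins2_cst n 1)];
  by apply: ler_Ecoins2 => a b _ _; case: (X a b).
Qed.

End Coins.

Lemma expected_algE (R : realFieldType) (pt pg : R) s o :
  expected_alg pt pg s o =
  Ecoins2 pt pg (size s) (fun a b => total_len (smooth_merge s o a b)).
Proof.
rewrite /expected_alg -Ecoins_Ecoins2 -sum_bern_weight; apply: eq_bigr => a _.
by rewrite -sum_bern_weight mulr_sumr; apply: eq_bigr => b _; rewrite mulrA.
Qed.

Lemma has_mask_iota (T : Type) (x0 : T) (p : pred T) m s : size m = size s ->
  has p (mask m s) = has (fun j => nth false m j && p (nth x0 s j)) (iota 0 (size s)).
Proof.
elim: s m => [|x s IH] [|b m] //= [/IH hm].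
rewrite -(addn0 1%N) iotaDl has_map /preim /=.
by case: b => /=; rewrite hm.
Qed.

Lemma has_mask_take (T : Type) (x0 : T) (p : pred T) m s i :
  (i <= size m)%N -> (i <= size s)%N ->
  has p (mask (take i m) (take i s)) =
  has (fun j => nth false m j && p (nth x0 s j)) (iota 0 i).
Proof.
move=> im i_s; rewrite (has_mask_iota x0) ?size_takel //.
by apply: eq_in_has => j; rewrite mem_iota add0n => /andP[_ ji] /=; rewrite !nth_take.
Qed.

Lemma pairwise_mask_nth (T : eqType) (x0 : T) (r : rel T) m s j k :
  pairwise r (mask m s) -> size m = size s -> (j < k < size s)%N ->
  nth false m j -> nth false m k -> r (nth x0 s j) (nth x0 s k).
Proof.
elim: s m j k => [|x s IH] [|b m] [|j] [|k] //=.
- case: b => //= /andP[/allP rx _] [sm] sk _ mk.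
  apply: rx; elim: s m k sm sk mk {IH} => [|z s IH] [|c m] [|k] //= [sm] sk.
    by move=> ->; rewrite mem_head.
  by case: c => /= mk; rewrite ?inE IH ?orbT.
- move=> rbm [sm] jk mj mk; apply: (IH m) => //.
  by case: b rbm => //= /andP[].
Qed.

Section Decisions.
Variable R : realFieldType.
Local Notation job := (job R).

Definition job0 : job := (0, 0).

Lemma overlapC : symmetric (@overlap R).
Proof. by move=> J K; rewrite /overlap andbC. Qed.

Lemma total_len_mask m (s : seq job) : size m = size s ->
  total_len (mask m s) = \sum_(i < size s) (nth false m i)%:R * len (nth job0 s i).
Proof.
rewrite /total_len; elim: s m => [|x s IH] [|b m] //=; first by rewrite big_nil big_ord0.
by case=> /IH hm; rewrite big_ord_recl /= -hm; case: b; rewrite /= ?big_cons; ring.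
Qed.

Lemma size_greedy_aux (acc s : seq job) : size (greedy_aux acc s) = size s.
Proof. by elim: s acc => [|J s IH] acc //=; rewrite IH. Qed.

Lemma nth_greedy_aux i (acc s : seq job) : (i < size s)%N ->
  nth false (greedy_aux acc s) i =
  ~~ (has (overlap (nth job0 s i)) acc ||
      has (overlap (nth job0 s i)) (mask (take i (greedy_aux acc s)) (take i s))).
Proof.
elim: s acc i => [|J s IH] acc [|i] //=; first by rewrite orbF.
rewrite ltnS => lt_is; rewrite IH //.
by case: (has (overlap J) acc) => //=; rewrite orbA (orbC _ (overlap _ J)).
Qed.

Lemma nth_greedy_dec i (s : seq job) : (i < size s)%N ->
  nth false (greedy_dec s) i =
  ~~ has (fun j => nth false (greedy_dec s) j && overlap (nth job0 s i) (nth job0 s j))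
         (iota 0 i).
Proof.
move=> lt_is; rewrite nth_greedy_aux // (has_mask_take job0) ?size_greedy_aux //;
  exact: ltnW.
Qed.

(* [t], [g]: the Trust and Greedy decisions on the job; [x], [y]: its [pt]- and [pg]-coins. *)
Definition accept_if_free (t g x y : bool) : bool :=
  if t && g then true else if t then x else if g then y else false.

Fixpoint smooth_dec_aux (S s : seq job) (t g a b : seq bool) : seq bool :=
  match s, t, g, a, b with
  | J :: s', ti :: t', gi :: g', ai :: a', bi :: b' =>
      let add := ~~ has (overlap J) S && accept_if_free ti gi ai bi in
      add :: smooth_dec_aux (if add then rcons S J else S) s' t' g' a' b'
  | _, _, _, _, _ => [::]
  end.

Lemma smooth_auxE S s t g a b :
  smooth_aux S s t g a b = S ++ mask (smooth_dec_aux S s t g a b) s.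
Proof.
elim: s S t g a b => [|J s IH] S [|ti t] [|gi g] [|x a] [|y b] /=; rewrite ?cats0 //.
rewrite IH; case: (has (overlap J) S) => //=.
by rewrite -/(accept_if_free ti gi x y); case: accept_if_free; rewrite //= cat_rcons.
Qed.

Lemma smooth_dec_aux_take k S s t g a b :
  smooth_dec_aux S s t g (take k a) (take k b) = take k (smooth_dec_aux S s t g a b).
Proof.
elim: s S t g a b k => [|J s IH] S [|ti t] [|gi g] [|x a] [|y b] [|k] //=.
by rewrite IH.
Qed.

Lemma size_smooth_dec_aux S s t g a b :
  size (smooth_dec_aux S s t g a b) =
  minn (size s) (minn (size t) (minn (size g) (minn (size a) (size b)))).
Proof.
elim: s S t g a b => [|J s IH] S [|ti t] [|gi g] [|x a] [|y b] //=;
  by rewrite ?minn0 ?IH ?minnSS.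
Qed.

Lemma nth_smooth_dec_aux i S s t g a b :
  (i < size (smooth_dec_aux S s t g a b))%N ->
  nth false (smooth_dec_aux S s t g a b) i =
  ~~ has (overlap (nth job0 s i)) (S ++ mask (take i (smooth_dec_aux S s t g a b)) (take i s)) &&
  accept_if_free (nth false t i) (nth false g i) (nth false a i) (nth false b i).
Proof.
elim: s S t g a b i => [|J s IH] S [|ti t] [|gi g] [|x a] [|y b] [|i] //=;
  first by rewrite cats0.
rewrite ltnS => lt_i; rewrite IH //.
by case: (~~ has (overlap J) S && _) => //=; rewrite cat_rcons.
Qed.

End Decisions.

Section Instance.
Variable R : realFieldType.
Variables pt pg : R.
Hypothesis pt01 : 0 <= pt <= 1.
Hypothesis pg01 : 0 <= pg <= 1.
Variables (s : seq (job R)) (o : seq bool).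
Hypothesis s_valid : valid_instance s.
Hypothesis size_o : size o = size s.
Hypothesis trust_feasible : feasible (trust s o).

Local Notation n := (size s).
Local Notation sj j := (nth (job0 R) s j).
Local Notation tj j := (nth false o j).
Local Notation gj j := (nth false (greedy_dec s) j).

Lemma job_len_gt0 j : (j < n)%N -> (sj j).1 < (sj j).2.
Proof. by case/andP: s_valid => /(all_nthP (job0 R)) len_gt0 _; apply: len_gt0. Qed.

Lemma release_mono j k : (j <= k)%N -> (k < n)%N -> (sj j).1 <= (sj k).1.
Proof.
case/andP: s_valid => _ s_sorted le_jk lt_kn.
have release_trans : transitive (fun J K : job R => J.1 <= K.1).
  by move=> J K L; apply: le_trans.
apply: (sorted_leq_nth release_trans (fun J => lexx J.1) (job0 R) s_sorted) => //.
by rewrite inE (leq_ltn_trans le_jk lt_kn).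
Qed.

(* Job [j] contains the release time of job [k]. *)
Lemma overlap_earlier j k i : (j < k)%N -> (k <= i)%N -> (i < n)%N ->
  overlap (sj i) (sj j) -> overlap (sj j) (sj k).
Proof.
rewrite /overlap => lt_jk le_ki lt_in /andP[ij _].
have lt_kn := leq_ltn_trans le_ki lt_in.
apply/andP; split.
- exact: le_lt_trans (release_mono (ltnW lt_jk) lt_kn) (job_len_gt0 lt_kn).
- exact: le_lt_trans (release_mono le_ki lt_in) ij.
Qed.

Lemma trust_disjoint j k : (j < k)%N -> (k < n)%N -> tj j -> tj k ->
  ~~ overlap (sj j) (sj k).
Proof.
move=> lt_jk lt_kn; apply: (pairwise_mask_nth _ trust_feasible size_o).
by rewrite lt_jk lt_kn.
Qed.

Lemma greedy_disjoint j k : (j < k)%N -> (k < n)%N -> gj j -> gj k ->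
  ~~ overlap (sj j) (sj k).
Proof.
move=> lt_jk lt_kn gj_j; rewrite nth_greedy_dec // => /hasPn/(_ j).
by rewrite mem_iota lt_jk gj_j overlapC => /(_ isT).
Qed.

Lemma greedy_blocker i : (i < n)%N -> ~~ gj i ->
  exists2 G, (G < i)%N & gj G && overlap (sj i) (sj G).
Proof.
move=> lt_in; rewrite nth_greedy_dec // negbK => /hasP[G].
by rewrite mem_iota => /andP[_ lt_Gi]; exists G.
Qed.

Lemma overlap_unique (Q : pred nat) i j k :
  (forall j k, (j < k)%N -> (k < n)%N -> Q j -> Q k -> ~~ overlap (sj j) (sj k)) ->
  (j < i)%N -> (k < i)%N -> (i < n)%N -> Q j -> Q k ->
  overlap (sj i) (sj j) -> overlap (sj i) (sj k) -> j = k.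
Proof.
move=> Q_disj lt_ji lt_ki lt_in Qj Qk ov_j ov_k.
case: (ltngtP j k) => // [lt_jk|lt_kj].
  by move: (Q_disj j k lt_jk (ltn_trans lt_ki lt_in) Qj Qk);
    rewrite (overlap_earlier lt_jk (ltnW lt_ki) lt_in ov_j).
by move: (Q_disj k j lt_kj (ltn_trans lt_ji lt_in) Qk Qj);
  rewrite (overlap_earlier lt_kj (ltnW lt_ji) lt_in ov_k).
Qed.

Definition smooth_dec (a b : seq bool) : seq bool :=
  smooth_dec_aux [::] s o (greedy_dec s) a b.

Definition blocked (i : nat) (a b : seq bool) : bool :=
  has (fun j => nth false (smooth_dec a b) j && overlap (sj i) (sj j)) (iota 0 i).

Definition accept_prob (j : nat) : R :=
  Ecoins2 pt pg n (fun a b => (nth false (smooth_dec a b) j)%:R).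

Lemma nth_smooth_dec i a b : (i < n)%N -> (i < size a)%N -> (i < size b)%N ->
  nth false (smooth_dec a b) i =
  ~~ blocked i a b && accept_if_free (tj i) (gj i) (nth false a i) (nth false b i).
Proof.
move=> lt_in lt_ia lt_ib.
have lt_id : (i < size (smooth_dec a b))%N.
  by rewrite size_smooth_dec_aux size_o size_greedy_aux !leq_min lt_in lt_ia lt_ib.
rewrite nth_smooth_dec_aux // cat0s (has_mask_take (job0 R)) //; exact: ltnW.
Qed.

Lemma blocked_take i a b : blocked i a b = blocked i (take i a) (take i b).
Proof.
apply: eq_in_has => j; rewrite mem_iota => /andP[_ lt_ji].
by rewrite /smooth_dec !smooth_dec_aux_take nth_take.
Qed.

Lemma smooth_dec_trust_or_greedy a b j : size a = n -> size b = n -> (j < n)%N ->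
  nth false (smooth_dec a b) j -> tj j || gj j.
Proof.
move=> sa sb lt_jn; rewrite nth_smooth_dec ?sa ?sb // => /andP[_].
by rewrite /accept_if_free; case: (tj j); case: (gj j).
Qed.

Lemma accept_probE i : (i < n)%N ->
  accept_prob i = Epair pt pg (fun x y => (accept_if_free (tj i) (gj i) x y)%:R) *
                  (1 - Ecoins2 pt pg n (fun a b => (blocked i a b)%:R)).
Proof.
move=> lt_in; rewrite /accept_prob.
rewrite (@Ecoins2_split _ pt pg i n _
  (fun a b x y => (~~ blocked i a b && accept_if_free (tj i) (gj i) x y)%:R) lt_in);
  last first.
  move=> a b a' b' x y sa sb.
  have lt_i_cat c c' z : size c = i -> (i < size (c ++ z :: c'))%N.
    by move=> <-; rewrite size_cat addnS ltnS leq_addr.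
  rewrite nth_smooth_dec ?lt_i_cat // !nth_cat sa sb ltnn subnn.
  by rewrite blocked_take !take_size_cat // -blocked_take.
rewrite (@Ecoins2_prefix _ pt pg i n (fun a b => (blocked i a b)%:R)); last 2 first.
- exact: ltnW.
- by move=> a b a' b' sa sb; rewrite blocked_take !take_size_cat // -blocked_take.
set q := Epair _ _ _.
transitivity (Ecoins2 pt pg i (fun a b => q * 1 + (- q) * (blocked i a b)%:R)).
  by apply: eq_Ecoins2 => a b _ _; rewrite /q /Epair; case: blocked => /=; ring.
by rewrite Ecoins2D (Ecoins2Z _ _ _ q (fun _ _ => 1)) Ecoins2Z Ecoins2_cst; ring.
Qed.

Lemma Epair_accept_if_free t g :
  Epair pt pg (fun x y => (accept_if_free t g x y)%:R) =
  if t && g then 1 else if t then pt else if g then pg else 0.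
Proof. by rewrite /Epair /accept_if_free; case: t; case: g => /=; ring. Qed.

Lemma blocked_by i J a b : (J < i)%N -> overlap (sj i) (sj J) ->
  (forall j, (j < i)%N -> nth false (smooth_dec a b) j -> overlap (sj i) (sj j) -> j = J) ->
  blocked i a b = nth false (smooth_dec a b) J.
Proof.
move=> lt_Ji ov_J only_J; apply/hasP/idP => [[j]|dJ].
  by rewrite mem_iota => /andP[_ lt_ji] /andP[dj ov_j]; rewrite -(only_J j).
by exists J; rewrite ?mem_iota ?dJ.
Qed.

Lemma not_blocked i a b :
  (forall j, (j < i)%N -> nth false (smooth_dec a b) j -> overlap (sj i) (sj j) -> False) ->
  blocked i a b = false.
Proof.
move=> none; apply/hasP => -[j]; rewrite mem_iota => /andP[_ lt_ji] /andP[dj ov_j].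
exact: (none j).
Qed.

Lemma accept_prob_01 j : 0 <= accept_prob j <= 1.
Proof. exact: Ecoins2_bool_01. Qed.

Lemma accept_prob_trust_greedy i : (i < n)%N -> tj i -> gj i -> accept_prob i = 1.
Proof.
move=> lt_in ti gi; rewrite accept_probE // Epair_accept_if_free ti gi.
rewrite (@eq_Ecoins2 _ pt pg n _ (fun _ _ => 0)) ?Ecoins2_cst ?subr0 ?mulr1 //.
move=> a b sa sb; rewrite not_blocked //= => j lt_ji dj ov_j.
have lt_jn := ltn_trans lt_ji lt_in.
case/orP: (smooth_dec_trust_or_greedy sa sb lt_jn dj) => [tj_j|gj_j].
- by move: (trust_disjoint lt_ji lt_in tj_j ti); rewrite overlapC ov_j.
- by move: (greedy_disjoint lt_ji lt_in gj_j gi); rewrite overlapC ov_j.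
Qed.

Lemma accept_prob_trust_only i : (i < n)%N -> tj i -> ~~ gj i ->
  exists2 G, (G < i)%N & [/\ gj G, ~~ tj G & accept_prob i = pt * (1 - accept_prob G)].
Proof.
move=> lt_in ti gi; have [G lt_Gi /andP[gG ov_G]] := greedy_blocker lt_in gi.
exists G => //; split=> //.
  by apply/negP => tG; move: (trust_disjoint lt_Gi lt_in tG ti); rewrite overlapC ov_G.
rewrite accept_probE // Epair_accept_if_free ti (negbTE gi) /=; congr (_ * (1 - _)).
apply: eq_Ecoins2 => a b sa sb; rewrite (@blocked_by i G) // => j lt_ji dj ov_j.
have lt_jn := ltn_trans lt_ji lt_in.
case/orP: (smooth_dec_trust_or_greedy sa sb lt_jn dj) => [tj_j|gj_j].
- by move: (trust_disjoint lt_ji lt_in tj_j ti); rewrite overlapC ov_j.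
- exact: (overlap_unique greedy_disjoint lt_ji lt_Gi).
Qed.

Lemma accept_prob_greedy_only i : (i < n)%N -> gj i -> ~~ tj i ->
  accept_prob i = pg \/
  exists2 J, (J < i)%N & [/\ tj J, ~~ gj J & accept_prob i = pg * (1 - accept_prob J)].
Proof.
move=> lt_in gi ti; rewrite accept_probE // Epair_accept_if_free (negbTE ti) gi /=.
have [/hasP[J]|/hasPn no_trust] :=
  boolP (has (fun j => tj j && overlap (sj i) (sj j)) (iota 0 i)).
  rewrite mem_iota => /andP[_ lt_Ji] /andP[tJ ov_J]; right; exists J => //; split=> //.
    by apply/negP => gJ; move: (greedy_disjoint lt_Ji lt_in gJ gi); rewrite overlapC ov_J.
  congr (_ * (1 - _)); apply: eq_Ecoins2 => a b sa sb.
  rewrite (@blocked_by i J) // => j lt_ji dj ov_j.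
  have lt_jn := ltn_trans lt_ji lt_in.
  case/orP: (smooth_dec_trust_or_greedy sa sb lt_jn dj) => [tj_j|gj_j].
  - exact: (overlap_unique trust_disjoint lt_ji lt_Ji).
  - by move: (greedy_disjoint lt_ji lt_in gj_j gi); rewrite overlapC ov_j.
left; rewrite (@eq_Ecoins2 _ pt pg n _ (fun _ _ => 0)) ?Ecoins2_cst ?subr0 ?mulr1 //.
move=> a b sa sb; rewrite not_blocked //= => j lt_ji dj ov_j.
have lt_jn := ltn_trans lt_ji lt_in.
case/orP: (smooth_dec_trust_or_greedy sa sb lt_jn dj) => [tj_j|gj_j].
- by move: (no_trust j); rewrite mem_iota lt_ji tj_j ov_j => /(_ isT).
- by move: (greedy_disjoint lt_ji lt_in gj_j gi); rewrite overlapC ov_j.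
Qed.

Lemma accept_prob_trust_ge i : (i < n)%N -> tj i -> pt * (1 - pg) <= accept_prob i.
Proof.
move: pt01 pg01 => /andP[pt0 pt1] /andP[pg0 pg1] lt_in ti.
have [gi|gi] := boolP (gj i).
  by rewrite accept_prob_trust_greedy //; nra.
have [G lt_Gi [gG tG ->]] := accept_prob_trust_only lt_in ti gi.
rewrite ler_wpM2l // lerD2l lerN2.
have [->|[J _ [_ _ ->]]] // := accept_prob_greedy_only (ltn_trans lt_Gi lt_in) gG tG.
by rewrite ler_piMr //; case/andP: (accept_prob_01 J) => ? ?; rewrite lerBlDr lerDl.
Qed.

(* A Greedy-only job can only be blocked by a Trust-only job, itself blocked by a
   Greedy job; [c] is a fixed point of the resulting two-step recursion. *)
Lemma accept_prob_greedy_ge (c : R) : c <= pg -> c = pg * (1 - pt * (1 - c)) ->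
  forall i, (i < n)%N -> gj i -> c <= accept_prob i.
Proof.
move: pt01 pg01 => /andP[pt0 _] /andP[pg0 pg1] c_pg c_fix.
elim/ltn_ind => i IH lt_in gi.
have [ti|ti] := boolP (tj i).
  by rewrite accept_prob_trust_greedy // (le_trans c_pg).
have [->|[J lt_Ji [tJ gJ ->]]] // := accept_prob_greedy_only lt_in gi ti.
have lt_Jn := ltn_trans lt_Ji lt_in.
have [G lt_GJ [gG _ ->]] := accept_prob_trust_only lt_Jn tJ gJ.
have c_G := IH G (ltn_trans lt_GJ lt_Ji) (ltn_trans lt_GJ lt_Jn) gG.
by rewrite {1}c_fix ler_wpM2l // lerD2l lerN2 ler_wpM2l // lerD2l lerN2.
Qed.

Lemma expected_alg_sum :
  expected_alg pt pg s o = \sum_(i < n) accept_prob i * len (sj i).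
Proof.
rewrite expected_algE.
under eq_Ecoins2 => a b sa sb.
  rewrite /smooth_merge smooth_auxE cat0s total_len_mask; last first.
    by rewrite size_smooth_dec_aux size_o size_greedy_aux sa sb !minnn.
  over.
rewrite (Ecoins2_sum _ _ _ _
  (fun i a b => (nth false (smooth_dec a b) i)%:R * len (sj i))).
apply: eq_bigr => i _.
by rewrite mulrC -Ecoins2Z; apply: eq_Ecoins2 => a b _ _; rewrite mulrC.
Qed.

Lemma len_ge0 i : (i < n)%N -> 0 <= len (sj i).
Proof. by move=> lt_in; rewrite subr_ge0 ltW // job_len_gt0. Qed.

Lemma expected_alg_ge0 : 0 <= expected_alg pt pg s o.
Proof.
rewrite expected_alg_sum sumr_ge0 // => i _.
by rewrite mulr_ge0 ?len_ge0 //; case/andP: (accept_prob_01 i).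
Qed.

Lemma expected_alg_ge_mask (c : R) m : size m = n ->
  (forall i, (i < n)%N -> nth false m i -> c <= accept_prob i) ->
  c * total_len (mask m s) <= expected_alg pt pg s o.
Proof.
move=> sm c_le; rewrite expected_alg_sum total_len_mask // mulr_sumr.
apply: ler_sum => i _; rewrite mulrA.
have [mi|mi] := boolP (nth false m i); rewrite /= ?mulr1 ?mulr0 ?mul0r.
  by rewrite ler_wpM2r ?len_ge0 ?c_le.
by rewrite mulr_ge0 ?len_ge0 //; case/andP: (accept_prob_01 i).
Qed.

Lemma expected_alg_ge_trust :
  pt * (1 - pg) * total_len (trust s o) <= expected_alg pt pg s o.
Proof. by apply: expected_alg_ge_mask => // i; apply: accept_prob_trust_ge. Qed.

Lemma expected_alg_ge_greedy : pt * pg < 1 ->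
  (pg - pt * pg) / (1 - pt * pg) * total_len (greedy s) <= expected_alg pt pg s o.
Proof.
move: pt01 pg01 => /andP[pt0 pt1] /andP[pg0 pg1] ptpg_lt1.
set c := _ / _; have d_gt0 : 0 < 1 - pt * pg by rewrite subr_gt0.
have c_def : c * (1 - pt * pg) = pg - pt * pg by rewrite divfK ?gt_eqF.
apply: expected_alg_ge_mask; first exact: size_greedy_aux.
apply: accept_prob_greedy_ge.
  have ptpg0 : 0 <= pt * pg by rewrite mulr_ge0.
  by rewrite -(ler_pM2r d_gt0) c_def; nra.
apply/eqP; rewrite -subr_eq0; apply/eqP.
by transitivity (c * (1 - pt * pg) - (pg - pt * pg)); [ring | rewrite c_def subrr].
Qed.

End Instance.
Unset Implicit Arguments.

Theorem mainTheorem5 (R : realFieldType) (pt pg : R)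
  (hpt : 0 <= pt <= 1) (hpg : 0 <= pg <= 1) (hprod : pt * pg < 1)
  (s : seq (job R)) (o : seq bool)
  (hs : valid_instance s) (ho : size o = size s)
  (hfeas : feasible (trust s o)) :
  Num.max (opt_value s * (1 - eta s o) * (pt * (1 - pg)))
          ((pg - pt * pg) / (1 - pt * pg) * total_len (greedy s))
    <= expected_alg pt pg s o.
Proof.
rewrite ge_max expected_alg_ge_greedy // andbT.
have [->|opt_neq0] := eqVneq (opt_value s) 0.
  by rewrite !mul0r expected_alg_ge0.
have -> : opt_value s * (1 - eta s o) = total_len (trust s o) by rewrite /eta; field.
by rewrite mulrC expected_alg_ge_trust.
Qed.
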